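(* Let $h$ be a positive integer and let $S_1,\ldots,S_n$ be sets of positive integers. For each $i$ let $G_{S_i}$ denote the $\mathcal{G}$-value sequence of $\mathrm{Subtraction}(S_i)$, and suppose that there exist sequences $a_1,\ldots,a_n$ of non-negative integers such that, for every $i$, $G_{S_i}$ is the $h$-stair of $a_i$, i.e. $G_{S_i}(xh+r)=a_i(x)h+r$ for all integers $x\ge 0$ and all $r\in\{0,1,\ldots,h-1\}$. Then for every position $(x_1,\ldots,x_n)$ of the generalized cyclic Nimhoff $\mathrm{GCN}(h;S_1,\ldots,S_n)$, $$\mathcal{G}(x_1,\ldots,x_n)=\left(\bigoplus_{i=1}^n\left\lfloor \frac{G_{S_i}(x_i)}{h}\right\rfloor\right)h+\left(\sum_{i=1}^n x_i\right)\bmod h.$$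
   Context: All games are impartial two-player games under the normal play rule (the player making the last move wins). For a finite set $T\subset\mathbb{N}_0$, $\mathrm{mex}\,T=\min(\mathbb{N}_0\setminus T)$. The $\mathcal{G}$-value (Grundy value) of a position $G$ is defined recursively by $\mathcal{G}(G)=\mathrm{mex}\{\mathcal{G}(G')\mid G\to G'\}$, where $G\to G'$ means $G'$ is reachable from $G$ in one move. The nim-sum $m_1\oplus\cdots\oplus m_n$ of non-negative integers is binary addition without carry (bitwise XOR). For a set $S$ of positive integers, $\mathrm{Subtraction}(S)$ is the game played on a single heap of $x\ge 0$ tokens, where a move takes a heap of $x$ tokens to a heap of $x-s$ tokens for some $s\in S$ with $s\le x$; its $\mathcal{G}$-value sequence is $G_S(x)$, the $\mathcal{G}$-value of a heap of $x$ tokens, $x=0,1,2,\ldots$. The generalized cyclic Nimhoff $\mathrm{GCN}(h;S_1,\ldots,S_n)$ has as positions the $n$-tuples $(x_1,\ldots,x_n)$ of non-negative integers; from $(x_1,\ldots,x_n)$ the legal moves go to any $n$-tuple of non-negative integers of one of the following forms: (i) $(x_1,\ldots,x_i-s_i,\ldots,x_n)$ for some $i$ and some $s_i\in S_i$ (only coordinate $i$ changed); or (ii) $(x_1-s_1,\ldots,x_n-s_n)$ where $s_1,\ldots,s_n$ are non-negative integers with $0<\sum_{i=1}^n s_i<h$. *)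

From mathcomp Require Import all_boot.
From Stdlib Require Import PeanoNat.
Set Implicit Arguments. Unset Strict Implicit. Unset Printing Implicit Defensive.

Definition mex (s : seq nat) : nat := find (fun k => k \notin s) (iota 0 (size s).+1).

(* When the fuel exceeds a strictly decreasing measure,
   this is exactly the recursive definition G(p) = mex {G(p') | p -> p'}. *)
Fixpoint grundy_fuel (T : Type) (opts : T -> seq T) (k : nat) (p : T) : nat :=
  match k with
  | 0 => 0
  | k'.+1 => mex (map (grundy_fuel opts k') (opts p))
  end.

Definition nimsum (a b : nat) : nat := Nat.lxor a b.

Definition sub_opts (S : pred nat) (x : nat) : seq nat :=
  [seq x - s | s <- iota 1 x & S s].

(* G_S(x): options decrease the heap strictly, so fuel x.+1 suffices. *)
Definition GS (S : pred nat) (x : nat) : nat := grundy_fuel (sub_opts S) x.+1 x.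

(* positions are lists x of length n; S i is the subtraction set of coordinate i *)

Fixpoint boxes (x : seq nat) : seq (seq nat) :=
  match x with
  | [::] => [:: [::]]
  | a :: xs => [seq b :: t | b <- iota 0 a.+1, t <- boxes xs]
  end.

Definition gcn_opts (h : nat) (S : nat -> pred nat) (x : seq nat) : seq (seq nat) :=
  (* type (i): subtract s in S_i (s <= x_i) from coordinate i only *)
  [seq set_nth 0 x i (nth 0 x i - s)
     | i <- iota 0 (size x), s <- [seq s <- iota 1 (nth 0 x i) | S i s]]
  ++
  (* type (ii): subtract s_i >= 0 with s_i <= x_i and 0 < sum s_i < h *)
  [seq [seq p.1 - p.2 | p <- zip x t]
     | t <- boxes x & (0 < sumn t) && (sumn t < h)].

(* every option strictly decreases sumn x, so fuel (sumn x).+1 suffices *)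
Definition Ggcn (h : nat) (S : nat -> pred nat) (x : seq nat) : nat :=
  grundy_fuel (gcn_opts h S) (sumn x).+1 x.

(* By induction on the total number of tokens it suffices to show that
   f(x) = N(x) h + (sum_i x_i mod h), with N(x) the nim-sum of the quotients
   G_{S_i}(x_i) / h, is the mex of f over the options of x.  For an h-stair,
   G_{S_i}(y) = y (mod h) and G_{S_i}(y) / h only depends on y / h.
   No option has value f(x): a single-heap move that keeps N(x) changes
   G_{S_i}(x_i) only through its residue, hence changes the sum mod h, and a move
   of type (ii) removes between 1 and h-1 tokens in total.
   Every u < f(x) is reached: if u / h < N(x), the Nim move lowering one quotient
   is realised in heap i by a subtraction move whose residue corrects the sum
   mod h; if u / h = N(x), a move of type (ii) takes the missing residue out of
   the residues x_i mod h, which leaves every x_i / h, hence N(x), unchanged. *)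

From HB Require Import structures.
From mathcomp Require Import all_boot zify.
From Stdlib Require Import PeanoNat.

Set Implicit Arguments. Unset Strict Implicit. Unset Printing Implicit Defensive.

Lemma has_notin_iota (s : seq nat) : has (fun k => k \notin s) (iota 0 (size s).+1).
Proof.
apply: contraT => /hasPn all_in.
have := uniq_leq_size (iota_uniq 0 (size s).+1) (fun k k_in => negbNE (all_in k k_in)).
by rewrite size_iota ltnn.
Qed.

Lemma mex_notin (s : seq nat) : mex s \notin s.
Proof.
have lt_find := has_notin_iota s; rewrite has_find size_iota in lt_find.
by have := nth_find 0 (has_notin_iota s); rewrite nth_iota.
Qed.

Lemma mex_lt (s : seq nat) u : u < mex s -> u \in s.
Proof.
move=> lt_u; have le_mex : mex s <= size (iota 0 (size s).+1) := find_size _ _.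
rewrite size_iota in le_mex.
have := before_find 0 lt_u; rewrite nth_iota ?add0n => [/negbFE //|].
exact: leq_trans lt_u le_mex.
Qed.

Lemma mex_eq (s : seq nat) v : v \notin s -> (forall u, u < v -> u \in s) -> mex s = v.
Proof.
move=> v_notin below_in; case: (ltngtP (mex s) v) => // [/below_in | /mex_lt].
  by rewrite (negbTE (mex_notin s)).
by rewrite (negbTE v_notin).
Qed.

Section GrundyFuel.

Variables (T : eqType) (opts : T -> seq T) (m : T -> nat).
Hypothesis opts_decr : forall p, all (fun q => m q < m p) (opts p).

Lemma grundy_fuel_stable k1 k2 p :
  m p < k1 -> m p < k2 -> grundy_fuel opts k1 p = grundy_fuel opts k2 p.
Proof.
elim: k1 k2 p => [|k1 IH] [|k2] p; rewrite ?ltn0 // => lt1 lt2.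
congr mex; apply/eq_in_map => q q_in.
by have := allP (opts_decr p) q q_in => lt_q; apply: IH; apply: leq_trans lt_q _.
Qed.

Lemma grundy_fuel_mex p :
  grundy_fuel opts (m p).+1 p = mex [seq grundy_fuel opts (m q).+1 q | q <- opts p].
Proof.
congr mex; apply/eq_in_map => q q_in.
by have := allP (opts_decr p) q q_in => lt_q; apply: grundy_fuel_stable.
Qed.

End GrundyFuel.

Lemma nimsumA : associative nimsum.
Proof. by move=> a b c; rewrite /nimsum Nat.lxor_assoc. Qed.

Lemma nimsumC : commutative nimsum.
Proof. by move=> a b; rewrite /nimsum Nat.lxor_comm. Qed.

Lemma nim0sum : left_id 0 nimsum.
Proof. by move=> a; rewrite /nimsum Nat.lxor_0_l. Qed.

HB.instance Definition _ := Monoid.isComLaw.Build nat 0 nimsum nimsumA nimsumC nim0sum.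

Lemma nimsumK b : cancel (nimsum^~ b) (nimsum^~ b).
Proof. by move=> a; rewrite /nimsum Nat.lxor_assoc Nat.lxor_nilpotent Nat.lxor_0_r. Qed.

Lemma nimsumKl a : cancel (nimsum a) (nimsum a).
Proof. by move=> b; rewrite nimsumC [nimsum a b]nimsumC nimsumK. Qed.

Lemma ltn_testbit x y k :
  (forall j, k < j -> Nat.testbit x j = Nat.testbit y j) ->
  ~~ Nat.testbit x k -> Nat.testbit y k -> x < y.
Proof.
elim: k x y => [|k IH] x y same_above x_k y_k.
- have same_half : Nat.div2 x = Nat.div2 y.
    by rewrite !Nat.div2_div; apply: Nat.bits_inj => j; rewrite !Nat.div2_bits; apply: same_above.
  rewrite Nat.bit0_odd in x_k; rewrite Nat.bit0_odd in y_k.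
  have := Nat.div2_odd x; have := Nat.div2_odd y.
  rewrite same_half y_k (negbTE x_k) /=; lia.
- have lt_half : Nat.div2 x < Nat.div2 y.
    rewrite !Nat.div2_div; apply: IH; rewrite ?Nat.div2_bits // => j lt_kj.
    by rewrite !Nat.div2_bits; apply: same_above.
  have := Nat.div2_odd x; have := Nat.div2_odd y.
  case: (Nat.odd x); case: (Nat.odd y) => /=; lia.
Qed.

(* Flipping the bits of [d] in [a] only changes bits up to the leading bit of [d]. *)
Lemma nimsum_ltn a d : 0 < d -> (nimsum a d < a) = Nat.testbit a (Nat.log2 d).
Proof.
move=> d_gt0; have d_lead : Nat.testbit d (Nat.log2 d) by apply: Nat.bit_log2; lia.
have same_above j : Nat.log2 d < j -> Nat.testbit (nimsum a d) j = Nat.testbit a j.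
  by move=> /ltP lt_j; rewrite Nat.lxor_spec (Nat.bits_above_log2 d j lt_j) Bool.xorb_false_r.
have flip_lead : Nat.testbit (nimsum a d) (Nat.log2 d) = ~~ Nat.testbit a (Nat.log2 d).
  by rewrite /nimsum Nat.lxor_spec d_lead Bool.xorb_true_r.
case a_k: (Nat.testbit a (Nat.log2 d)).
- by apply: (ltn_testbit same_above); rewrite ?flip_lead a_k.
- apply/negbTE; rewrite -leqNgt ltnW //.
  apply: (@ltn_testbit _ _ (Nat.log2 d)); rewrite ?flip_lead ?a_k // => j lt_j.
  by rewrite same_above.
Qed.

Section BigNimsum.

Variables (n : nat) (F : nat -> nat).

Local Notation nim_F := (\big[nimsum/0]_(j < n) F j).

Lemma bignimsum_testbit k :
  Nat.testbit nim_F k -> exists2 i, i < n & Nat.testbit (F i) k.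
Proof.
apply: (big_ind (fun v => Nat.testbit v k -> exists2 i, i < n & Nat.testbit (F i) k)).
- by rewrite Nat.bits_0.
- move=> a b IHa IHb; rewrite /nimsum Nat.lxor_spec.
  by case a_k: (Nat.testbit a k); [move=> _; apply: IHa | apply: IHb].
- by move=> i _ F_k; exists i.
Qed.

(* Bouton's move: flip the term that holds the leading bit of [nim_F (+) B]. *)
Lemma bignimsum_ltn B :
  B < nim_F -> exists2 i, i < n & nimsum (F i) (nimsum nim_F B) < F i.
Proof.
move=> lt_B; set d := nimsum nim_F B.
have d_gt0 : 0 < d.
  by rewrite lt0n; apply/eqP => /Nat.lxor_eq eq_B; rewrite eq_B ltnn in lt_B.
have nim_F_lead : Nat.testbit nim_F (Nat.log2 d).
  by rewrite -nimsum_ltn // /d nimsumKl.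
have [i lt_i F_i_lead] := bignimsum_testbit nim_F_lead.
by exists i; rewrite // nimsum_ltn.
Qed.

Lemma bignimsum_update G i : i < n -> (forall j, j < n -> j != i -> G j = F j) ->
  \big[nimsum/0]_(j < n) G j = nimsum (nimsum nim_F (F i)) (G i).
Proof.
move=> lt_i G_F; rewrite (bigD1 (Ordinal lt_i)) //= [nim_F](bigD1 (Ordinal lt_i)) //=.
rewrite [nimsum (F i) _]nimsumC nimsumK nimsumC; congr nimsum.
by apply: eq_bigr => j ne_j; apply: G_F.
Qed.

End BigNimsum.

Lemma mem_sub_opts (S : pred nat) x y :
  reflect (exists2 s, [/\ S s, 0 < s & s <= x] & y = x - s) (y \in sub_opts S x).
Proof.
apply: (iffP mapP) => [[s] | [s [S_s s_gt0 s_le] ->]].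
  by rewrite mem_filter mem_iota add1n ltnS => /and3P[S_s s_gt0 s_le] ->; exists s.
by exists s; rewrite // mem_filter mem_iota add1n ltnS S_s s_gt0.
Qed.

Lemma sub_opts_decr (S : pred nat) x : all (fun y => y < x) (sub_opts S x).
Proof. by apply/allP => y /mem_sub_opts[s [_ s_gt0 s_le] ->]; lia. Qed.

Lemma GS_mex (S : pred nat) x : GS S x = mex [seq GS S y | y <- sub_opts S x].
Proof. exact: (grundy_fuel_mex (@sub_opts_decr S) x). Qed.

Lemma GS_subn_neq (S : pred nat) x s : S s -> 0 < s -> s <= x -> GS S (x - s) != GS S x.
Proof.
move=> S_s s_gt0 s_le; apply: contraNneq (mex_notin [seq GS S y | y <- sub_opts S x]).
by rewrite -GS_mex => <-; apply: map_f; apply/mem_sub_opts; exists s.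
Qed.

Lemma GS_subn_reach (S : pred nat) x u :
  u < GS S x -> exists2 s, [/\ S s, 0 < s & s <= x] & GS S (x - s) = u.
Proof.
rewrite GS_mex => /mex_lt/mapP[y /mem_sub_opts[s s_ok ->] ->].
by exists s.
Qed.

Lemma sumn_set_nth (x : seq nat) i v :
  i < size x -> sumn (set_nth 0 x i v) + nth 0 x i = sumn x + v.
Proof. by elim: x i => [|a x IH] [|i] //= lt_i; [lia | have := IH i lt_i; lia]. Qed.

Lemma mem_boxes x t :
  reflect (size t = size x /\ forall j, nth 0 t j <= nth 0 x j) (t \in boxes x).
Proof.
elim: x t => [|a x IH] t.
  by rewrite /= inE; apply: (iffP eqP) => [-> | [/size0nil -> _]].
apply: (iffP allpairsPdep) => [[b [t' [b_in /IH[size_t' le_t'] ->]]] | [size_t le_t]].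
  split=> [|[|j]] /=; rewrite ?size_t' //; by move: b_in; rewrite mem_iota; lia.
case: t size_t le_t => [|b t'] // /succn_inj size_t' le_t; exists b, t'; split=> //.
  by rewrite mem_iota; have /= := le_t 0; lia.
by apply/IH; split=> // j; apply: (le_t j.+1).
Qed.

Definition subn_seq (x t : seq nat) : seq nat := [seq p.1 - p.2 | p <- zip x t].

Lemma size_subn_seq x t : size t = size x -> size (subn_seq x t) = size x.
Proof. by move=> size_t; rewrite size_map size_zip size_t minnn. Qed.

Lemma nth_subn_seq x t j : size t = size x -> nth 0 (subn_seq x t) j = nth 0 x j - nth 0 t j.
Proof.
elim: x t j => [|a x IH] [|b t] [|j] //= [size_t]; rewrite ?nth_nil //.
exact: IH.
Qed.

Lemma sumn_subn_seq x t : t \in boxes x -> sumn (subn_seq x t) + sumn t = sumn x.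
Proof.
elim: x t => [|a x IH] [|b t] /mem_boxes[] //= [size_t] le_t.
have t_box : t \in boxes x by apply/mem_boxes; split=> // j; apply: (le_t j.+1).
have := IH t t_box; have := le_t 0; rewrite /= -/(subn_seq x t); lia.
Qed.

Lemma exists_sumn_below (b : seq nat) d : d <= sumn b ->
  exists2 t, size t = size b & (forall j, nth 0 t j <= nth 0 b j) /\ sumn t = d.
Proof.
elim: b d => [|c b IH] d /=.
  by rewrite leqn0 => /eqP ->; exists [::] => //; split=> // j; rewrite nth_nil.
move=> le_d; have [t size_t [le_t sum_t]] := IH (d - minn d c) ltac:(lia).
exists (minn d c :: t); rewrite /= ?size_t //; split; last by lia.
by case=> [|j] /=; [apply: geq_minr | apply: le_t].
Qed.

Section GcnOptions.

Variables (h : nat) (S : nat -> pred nat) (x : seq nat).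

Lemma mem_gcn_opts y :
  y \in gcn_opts h S x ->
  (exists i s, [/\ i < size x, S i s, 0 < s, s <= nth 0 x i & y = set_nth 0 x i (nth 0 x i - s)])
  \/ (exists t, [/\ t \in boxes x, 0 < sumn t, sumn t < h & y = subn_seq x t]).
Proof.
rewrite mem_cat => /orP[/allpairsPdep[i [s [i_in s_in ->]]] | /mapP[t t_in ->]].
  left; exists i, s; move: i_in s_in; rewrite mem_iota mem_filter mem_iota.
  by move=> /andP[_ lt_i] /and3P[S_s s_gt0 s_le].
by right; exists t; move: t_in; rewrite mem_filter => /andP[/andP[t_gt0 t_lt] t_in].
Qed.

Lemma gcn_opts_single i s : i < size x -> S i s -> 0 < s -> s <= nth 0 x i ->
  set_nth 0 x i (nth 0 x i - s) \in gcn_opts h S x.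
Proof.
move=> lt_i S_s s_gt0 s_le; rewrite mem_cat; apply/orP; left.
apply/allpairsPdep; exists i, s; split=> //; first by rewrite mem_iota.
by rewrite mem_filter mem_iota S_s s_gt0 add1n ltnS.
Qed.

Lemma gcn_opts_box t : t \in boxes x -> 0 < sumn t < h -> subn_seq x t \in gcn_opts h S x.
Proof.
move=> t_box t_ok; rewrite mem_cat; apply/orP; right.
by apply: map_f; rewrite mem_filter t_ok.
Qed.

Lemma gcn_opts_decr y : y \in gcn_opts h S x -> sumn y < sumn x /\ size y = size x.
Proof.
case/mem_gcn_opts => [[i [s [lt_i _ s_gt0 s_le ->]]] | [t [t_box t_gt0 _ ->]]].
  split; last by rewrite size_set_nth; apply/maxn_idPr.
  by have := sumn_set_nth (nth 0 x i - s) lt_i; lia.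
have [size_t _] := mem_boxes x t t_box.
by split; [have := sumn_subn_seq t_box; lia | apply: size_subn_seq].
Qed.

End GcnOptions.

Lemma Ggcn_mex h S x : Ggcn h S x = mex [seq Ggcn h S y | y <- gcn_opts h S x].
Proof.
apply: (grundy_fuel_mex _ x) => p.
by apply/allP => y /gcn_opts_decr[].
Qed.

Lemma divn_subn_small h y t : 0 < h -> t <= y %% h -> (y - t) %/ h = y %/ h.
Proof.
move=> h_gt0 le_t; have lt_t : t < h by apply: leq_ltn_trans le_t (ltn_pmod y h_gt0).
by rewrite divnB // (divn_small lt_t) subn0 (modn_small lt_t) ltnNge le_t subn0.
Qed.

Lemma modn_sumn h (x : seq nat) : sumn x %% h = sumn [seq y %% h | y <- x] %% h.
Proof. by rewrite !sumnE big_map modn_summ. Qed.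

Section Stair.

Variables (h : nat) (g a : nat -> nat).
Hypotheses (h_gt0 : 0 < h) (g_stair : forall q r, r < h -> g (q * h + r) = a q * h + r).

Lemma stair_divn y : g y %/ h = a (y %/ h).
Proof.
have lt_r := ltn_pmod y h_gt0.
rewrite {1}(divn_eq y h) g_stair //.
by rewrite divnMDl // (divn_small lt_r) addn0.
Qed.

Lemma stair_modn y : g y %% h = y %% h.
Proof.
have lt_r := ltn_pmod y h_gt0.
by rewrite {1}(divn_eq y h) g_stair // modnMDl (modn_small lt_r).
Qed.

End Stair.

Section GcnValue.

Variables (h n : nat) (S : nat -> pred nat).
Hypothesis h_gt0 : 0 < h.
Hypothesis S_stair : forall i, i < n ->
  exists a : nat -> nat, forall q r, r < h -> GS (S i) (q * h + r) = a q * h + r.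

Definition gcn_nim (x : seq nat) : nat :=
  \big[nimsum/0]_(i < n) (GS (S i) (nth 0 x i) %/ h).

Definition gcn_value (x : seq nat) : nat := gcn_nim x * h + sumn x %% h.

Lemma GS_modn i y : i < n -> GS (S i) y %% h = y %% h.
Proof. by move=> /S_stair[a stair]; apply: stair_modn h_gt0 stair y. Qed.

Lemma GS_divn_eq i y y' : i < n -> y %/ h = y' %/ h -> GS (S i) y %/ h = GS (S i) y' %/ h.
Proof. by move=> /S_stair[a stair] eq_y; rewrite !(stair_divn h_gt0 stair) eq_y. Qed.

Lemma gcn_value_divn x : gcn_value x %/ h = gcn_nim x.
Proof. by rewrite divnMDl // divn_small ?addn0 // ltn_pmod. Qed.

Lemma gcn_value_modn x : gcn_value x %% h = sumn x %% h.
Proof. by rewrite modnMDl modn_mod. Qed.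

Lemma gcn_valueP x u : gcn_nim x = u %/ h -> sumn x = u %[mod h] -> gcn_value x = u.
Proof. by rewrite /gcn_value => -> ->; rewrite -divn_eq. Qed.

Lemma gcn_nim_set_nth x i v : i < n ->
  gcn_nim (set_nth 0 x i v) =
  nimsum (nimsum (gcn_nim x) (GS (S i) (nth 0 x i) %/ h)) (GS (S i) v %/ h).
Proof.
move=> lt_i; rewrite /gcn_nim.
rewrite (@bignimsum_update n (fun j => GS (S j) (nth 0 x j) %/ h)
           (fun j => GS (S j) (nth 0 (set_nth 0 x i v) j) %/ h) i lt_i).
  by rewrite nth_set_nth /= eqxx.
by move=> j _ ne_j; rewrite nth_set_nth /= (negbTE ne_j).
Qed.

Lemma gcn_value_option_neq x z :
  size x = n -> z \in gcn_opts h S x -> gcn_value z != gcn_value x.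
Proof.
move=> size_x z_opt; apply/eqP => eq_val.
have eq_nim : gcn_nim z = gcn_nim x by rewrite -gcn_value_divn eq_val gcn_value_divn.
have eq_mod : sumn z = sumn x %[mod h] by rewrite -gcn_value_modn eq_val gcn_value_modn.
case/mem_gcn_opts: z_opt eq_nim eq_mod
  => [[i [s [lt_i S_s s_gt0 s_le ->]]] | [t [t_box t_gt0 t_lt ->]]].
- have lt_in : i < n by rewrite -size_x.
  set xi := nth 0 x i.
  rewrite gcn_nim_set_nth // => /(congr1 (nimsum^~ (GS (S i) (xi - s) %/ h))).
  rewrite nimsumK => /(can_inj (nimsumKl _)) eq_div eq_mod.
  have sum_z := sumn_set_nth (xi - s) lt_i.
  have eq_xi : xi = xi - s %[mod h].
    by apply/eqP; rewrite -(eqn_modDl (sumn x)) -sum_z -modnDml -eq_mod modnDml.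
  have := GS_subn_neq S_s s_gt0 s_le.
  by rewrite [GS _ xi](divn_eq _ h) [GS _ (xi - s)](divn_eq _ h) !GS_modn // eq_div eq_xi eqxx.
- move=> _ eq_mod; have := sumn_subn_seq t_box.
  move=> /(congr1 (modn^~ h)); rewrite -modnDml eq_mod -[sumn x in RHS]addn0 => /eqP.
  by rewrite modnDml eqn_modDl mod0n modn_small // => /eqP t_eq0; rewrite t_eq0 in t_gt0.
Qed.

Lemma gcn_value_reach_nim x u : size x = n -> u %/ h < gcn_nim x ->
  exists2 z, z \in gcn_opts h S x & gcn_value z = u.
Proof.
move=> size_x lt_u.
have [i lt_in lt_Fi] := @bignimsum_ltn n (fun j => GS (S j) (nth 0 x j) %/ h) _ lt_u.
have lt_i : i < size x by rewrite size_x.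
set xi := nth 0 x i in lt_Fi *.
set c := nimsum _ _ in lt_Fi.
pose rest := sumn (set_nth 0 x i 0).
(* The residue [r] of the new heap makes the total sum congruent to [u]. *)
pose r := (u + (h - rest %% h)) %% h.
have lt_r : r < h by apply: ltn_pmod.
have rest_r : rest + r = u %[mod h].
  rewrite modnDmr -modnDml addnCA subnKC ?modnDr //.
  exact: ltnW (ltn_pmod _ h_gt0).
have lt_w : c * h + r < GS (S i) xi.
  rewrite [GS _ xi](divn_eq _ h); apply: leq_trans (leq_addr _ _).
  apply: leq_trans (_ : c.+1 * h <= _); first by rewrite mulSnr ltn_add2l.
  by rewrite leq_mul2r lt_Fi orbT.
have [s [S_s s_gt0 s_le] GS_s] := GS_subn_reach lt_w.
exists (set_nth 0 x i (xi - s)); first exact: gcn_opts_single.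
apply: gcn_valueP.
  by rewrite gcn_nim_set_nth // GS_s divnMDl // (divn_small lt_r) addn0 -nimsumA !nimsumKl.
have -> : sumn (set_nth 0 x i (xi - s)) = rest + (xi - s).
  by have := sumn_set_nth (xi - s) lt_i; have := sumn_set_nth 0 lt_i; lia.
by rewrite -modnDmr -(GS_modn (xi - s) lt_in) GS_s modnMDl modnDmr rest_r.
Qed.

Lemma gcn_value_reach_mod x u : size x = n -> u %/ h = gcn_nim x -> u %% h < sumn x %% h ->
  exists2 z, z \in gcn_opts h S x & gcn_value z = u.
Proof.
move=> size_x eq_div lt_mod; set d := sumn x %% h - u %% h.
have le_d : d <= sumn [seq y %% h | y <- x].
  by apply: leq_trans (leq_subr _ _) _; rewrite modn_sumn leq_mod.
have [t size_t [le_t sum_t]] := exists_sumn_below le_d.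
rewrite size_map in size_t.
have le_t_mod j : nth 0 t j <= nth 0 x j %% h.
  have [lt_j | le_j] := ltnP j (size x); last by rewrite nth_default ?size_t.
  by have := le_t j; rewrite (nth_map 0).
have t_box : t \in boxes x.
  by apply/mem_boxes; split=> // j; apply: leq_trans (le_t_mod j) (leq_mod _ _).
exists (subn_seq x t).
  apply: gcn_opts_box; rewrite // sum_t subn_gt0 lt_mod /=.
  exact: leq_ltn_trans (leq_subr _ _) (ltn_pmod _ h_gt0).
apply: gcn_valueP.
  rewrite eq_div; apply: eq_bigr => j _; apply: GS_divn_eq => //.
  by rewrite nth_subn_seq // divn_subn_small.
have -> : sumn (subn_seq x t) = sumn x %/ h * h + u %% h.
  have := sumn_subn_seq t_box; have := divn_eq (sumn x) h.
  rewrite sum_t /d; move: lt_mod; move: (sumn x %/ h * h) (sumn x %% h) => Q R; lia.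
by rewrite modnMDl modn_mod.
Qed.

Lemma gcn_value_reach x u : size x = n -> u < gcn_value x ->
  exists2 z, z \in gcn_opts h S x & gcn_value z = u.
Proof.
move=> size_x lt_u.
have : u %/ h <= gcn_nim x by rewrite -(gcn_value_divn x) leq_div2r // ltnW.
rewrite leq_eqVlt => /orP[/eqP eq_div | lt_div]; last exact: gcn_value_reach_nim.
apply: gcn_value_reach_mod => //.
by move: lt_u; rewrite {1}(divn_eq u h) eq_div ltn_add2l.
Qed.

Lemma Ggcn_value x : size x = n -> Ggcn h S x = gcn_value x.
Proof.
have [m] := ubnP (sumn x); elim: m x => // m IH x /ltnSE le_x size_x.
rewrite Ggcn_mex.
have -> : [seq Ggcn h S y | y <- gcn_opts h S x] = [seq gcn_value y | y <- gcn_opts h S x].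
  apply/eq_in_map => y /gcn_opts_decr[lt_y size_y].
  by apply: IH; [apply: leq_trans lt_y le_x | rewrite size_y].
apply: mex_eq => [|u /(gcn_value_reach size_x)[z z_opt <-]]; last exact: map_f.
apply/mapP => -[z z_opt eq_z].
by have := gcn_value_option_neq size_x z_opt; rewrite eq_z eqxx.
Qed.

End GcnValue.

Theorem theorem2p1 (h n : nat) (S : nat -> pred nat) :
  0 < h ->
  (forall i, i < n -> forall s, S i s -> 0 < s) ->
  (forall i, i < n -> exists a : nat -> nat,
       forall q r, r < h -> GS (S i) (q * h + r) = a q * h + r) ->
  forall x : seq nat, size x = n ->
    Ggcn h S x =
      (\big[nimsum/0]_(i < n) (GS (S i) (nth 0 x i) %/ h)) * h + (sumn x) %% h.
Proof.
(* Positivity of the [S i] is built into [sub_opts] and [gcn_opts], which only subtract [s >= 1]. *)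
move=> h_gt0 _ S_stair x size_x.
exact: Ggcn_value h_gt0 S_stair x size_x.
Qed.
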